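(* Let $\mathcal{T}$ be a $2$-eligible microdata table and $l=2$. Then the algorithm described in the context (with arbitrary tie-breaking) always terminates during Phase One or Phase Two, and its output is a feasible solution of the reformulated tuple minimization problem whose residue set $\ddot{R}$ satisfies $|\ddot{R}| \le OPT + 1$.
   Context: A microdata table $\mathcal{T}$ is a multiset of $n$ tuples with values on $d$ quasi-identifier (QI) attributes and one sensitive attribute (SA). For a multiset $Q$ and SA value $v$, $h(Q,v)$ is the number of tuples in $Q$ with SA value $v$, $h(Q)=\max_v h(Q,v)$, pillars of $Q$ are the $v$ with $h(Q,v)=h(Q)$; $Q$ is $l$-eligible if $|Q|\ge l\cdot h(Q)$. Let $Q_1,\dots,Q_s$ be the maximal classes of tuples of $\mathcal{T}$ with identical values on all QI attributes. Reformulated tuple minimization: choose sub-multisets $Q'_i\subseteq Q_i$ and $R'=\mathcal{T}\setminus\bigcup_i Q'_i$ with all $Q'_i$ and $R'$ $l$-eligible, minimizing $|R'|$; $OPT$ is the minimum. The algorithm only moves tuples from the groups into a set $R$ (initially empty). Phase One: for each $i$, while $Q_i$ is not $l$-eligible, move a tuple of a pillar of $Q_i$ to $R$; if then $R$ is $l$-eligible, terminate. Phase Two terminology (w.r.t. current state): a group $Q$ is thin if $|Q|=l\cdot h(Q)$ and fat if $|Q|\ge l\cdot h(Q)+1$; $Q$ is conflicting if some pillar of $Q$ is a pillar of $R$; $Q$ is dead if thin and conflicting, alive otherwise; an SA value $v$ is alive if some alive group $Q$ has $h(Q,v)>0$. Phase Two iterates: if no SA value is alive, Phase Two ends (and Phase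 Three would follow). Otherwise pick an alive SA value $v$ minimizing $h(R,v)$ and an alive group $Q$ with $h(Q,v)>0$ (ties arbitrary); if $Q$ is fat move one tuple with SA value $v$ from $Q$ to $R$; if $Q$ is thin move one tuple of each pillar of $Q$ to $R$. If $R$ is now $l$-eligible, the algorithm terminates; $\ddot{R}$ is $R$ at termination. *)

(* MathComp (boot). Microdata tables as multisets = sequences of
   tuples (qi, sa) with qi : Q (the vector of QI values) and sa : V. *)
From mathcomp Require Import all_boot.
Set Implicit Arguments. Unset Strict Implicit. Unset Printing Implicit Defensive.

Section Micro.
Variables (Q V : eqType).
Notation tup := (Q * V)%type.
Notation mset := (seq tup).

Definition hv (S : mset) (v : V) : nat := count (fun t => t.2 == v) S.
(* h(S) = max_v h(S,v)  (0 for the empty multiset) *)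
Definition hmax (S : mset) : nat := \max_(t <- S) hv S t.2.
Definition pillar (S : mset) (v : V) : bool := hv S v == hmax S.
Definition eligible (l : nat) (S : mset) : bool := l * hmax S <= size S.

(* the QI values occurring in T; the maximal QI-classes are indexed by them *)
Definition qis (T : mset) : seq Q := undup (map fst T).
Definition qclass (T : mset) (q : Q) : mset := [seq t <- T | t.1 == q].

(* Feasible solution of the reformulated tuple minimization problem:
   sel q is the sub-multiset Q'_q of the class Q_q, and R' is the rest. *)
Definition feasible (l : nat) (T : mset) (sel : Q -> mset) (R' : mset) : Prop :=
  [/\ perm_eq T (R' ++ flatten [seq sel q | q <- qis T]),
      (forall q, q \in qis T -> all (fun t => t.1 == q) (sel q)),
      (forall q, q \in qis T -> eligible l (sel q)) &
      eligible l R'].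

Definition thin (l : nat) (S : mset) : bool := size S == l * hmax S.
Definition fat (l : nat) (S : mset) : bool := l * hmax S + 1 <= size S.
Definition conflicting (S R : mset) : Prop := exists v, pillar S v && pillar R v.
Definition dead (l : nat) (S R : mset) : Prop := thin l S /\ conflicting S R.
Definition alive (l : nat) (S R : mset) : Prop := ~ dead l S R.
Definition alive_val (l : nat) (qs : seq Q) (G : Q -> mset) (R : mset) (v : V) : Prop :=
  exists2 q, q \in qs & alive l (G q) R /\ 0 < hv (G q) v.

Inductive phase := PhaseOne of seq Q | PhaseTwo | PhaseThree | Terminated.
Record state := St { ph : phase; grp : Q -> mset; res : mset }.

Definition upd (G : Q -> mset) (q : Q) (S : mset) : Q -> mset :=
  fun q' => if q' == q then S else G q'.

(* One step of the algorithm (all tie-breaking choices allowed).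
   qs = the indices of the groups, i.e. qis T. *)
Inductive step (l : nat) (qs : seq Q) : state -> state -> Prop :=
  | s1_move q rest G R t :
      ~~ eligible l (G q) -> t \in G q -> pillar (G q) t.2 ->
      step l qs (St (PhaseOne (q :: rest)) G R)
                (St (PhaseOne (q :: rest)) (upd G q (rem t (G q))) (t :: R))
  | s1_next q rest G R :
      eligible l (G q) ->
      step l qs (St (PhaseOne (q :: rest)) G R) (St (PhaseOne rest) G R)
  | s1_term G R : eligible l R ->
      step l qs (St (PhaseOne [::]) G R) (St Terminated G R)
  | s1_to2 G R : ~~ eligible l R ->
      step l qs (St (PhaseOne [::]) G R) (St PhaseTwo G R)
  | s2_end G R : (forall v, ~ alive_val l qs G R v) ->
      step l qs (St PhaseTwo G R) (St PhaseThree G R)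
  | s2_fat G R v q t :
      alive_val l qs G R v ->
      (forall w, alive_val l qs G R w -> hv R v <= hv R w) ->
      q \in qs -> alive l (G q) R -> 0 < hv (G q) v ->
      fat l (G q) -> t \in G q -> t.2 = v ->
      step l qs (St PhaseTwo G R)
        (St (if eligible l (t :: R) then Terminated else PhaseTwo)
            (upd G q (rem t (G q))) (t :: R))
  | s2_thin G R v q :
      alive_val l qs G R v ->
      (forall w, alive_val l qs G R w -> hv R v <= hv R w) ->
      q \in qs -> alive l (G q) R -> 0 < hv (G q) v ->
      thin l (G q) ->
      let P := undup [seq t <- G q | pillar (G q) t.2] in
      step l qs (St PhaseTwo G R)
        (St (if eligible l (P ++ R) then Terminated else PhaseTwo)
            (upd G q (foldr (fun t S => rem t S) (G q) P)) (P ++ R)).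

Definition init (T : mset) : state := St (PhaseOne (qis T)) (qclass T) [::].

Inductive reach (l : nat) (qs : seq Q) (s : state) : state -> Prop :=
  | reach_refl : reach l qs s s
  | reach_step s1 s2 : reach l qs s s1 -> step l qs s1 s2 -> reach l qs s s2.

End Micro.
Arguments PhaseTwo {Q}. Arguments PhaseThree {Q}. Arguments Terminated {Q}.

From mathcomp Require Import all_boot zify.
From Stdlib Require Import Classical.
Set Implicit Arguments. Unset Strict Implicit. Unset Printing Implicit Defensive.

(* Phase One only removes tuples that every feasible solution removes too: if a class
   Q_q is not 2-eligible and u is its pillar, an eligible Q'_q inside Q_q keeps at most
   |Q'_q|/2 copies of (q,u), so R' contains at least 2 h(Q_q,u) - |Q_q| of them.  Hence the
   residue R after Phase One is dominated, tuple by tuple, by every feasible R'.  If R is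
   not eligible it has a strict majority value w, and h(R,w) <= h(R',w).  Phase Two never
   moves a tuple with value w: by 2-eligibility of T some alive value other than w
   exists, and it is strictly rarer in R than w, so the chosen value of a fat group is
   not w; and a thin alive group cannot have w, the pillar of R, as a pillar.  A step
   adds at most two tuples, each of a different value, so at termination
   |R| <= 2 h(R,w) + 1 <= 2 h(R',w) + 1 <= |R'| + 1.  Termination follows because every
   step moves a tuple or advances Phase One, and the same alive value other than w
   shows that Phase Two cannot get stuck. *)

Lemma bigmax_seq_attained (A : eqType) (F : A -> nat) (s : seq A) :
  s != [::] -> exists2 x, x \in s & \max_(y <- s) F y = F x.
Proof.
elim: s => // x [|y s] IH _; rewrite big_cons.
  by exists x; rewrite ?mem_head // big_nil maxn0.
have [z zs ->] := IH isT.
case: (leqP (F z) (F x)) => [le_zx | lt_xz].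
  by exists x; rewrite ?mem_head //; lia.
by exists z; [rewrite inE zs orbT | lia].
Qed.

Lemma ex_minimizer (A : Type) (P : A -> Prop) (f : A -> nat) :
  (exists x, P x) -> exists2 x, P x & forall y, P y -> f x <= f y.
Proof.
move=> [x Px]; elim: {x}(f x) {-2}x (leqnn (f x)) Px => [|n IH] x le_fx Px.
  by exists x => // y _; lia.
case: (classic (exists2 y, P y & f y < f x)) => [[y Py lt_yx] | no_smaller].
  by apply: (IH y) => //; lia.
exists x => // y Py; rewrite leqNgt; apply/negP => lt_yx.
by apply: no_smaller; exists y.
Qed.

Lemma leq_count_of_count_mem (A : eqType) (s1 s2 : seq A) (a : pred A) :
  (forall x, count_mem x s1 <= count_mem x s2) -> count a s1 <= count a s2.
Proof.
by move/count_subseqP=> [s sub_s /permP ->]; apply: leq_count_subseq.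
Qed.

Lemma sum_count_mem (A : eqType) (P s : seq A) :
  uniq P -> \sum_(p <- P) count_mem p s = count (mem P) s.
Proof.
elim: P => [|p P IH] /=; first by rewrite big_nil count_pred0.
move=> /andP[pP uP]; rewrite big_cons IH // -[RHS]addn0.
rewrite -(count_pred0 s) -count_predUI; congr (_ + _); apply: eq_count => x /=.
by apply/negP => /andP[/eqP -> /= xP]; rewrite xP in pP.
Qed.

Lemma perm_flatten_undup_filter (A B : eqType) (f : A -> B) (s : seq A) :
  perm_eq s (flatten [seq [seq x <- s | f x == b] | b <- undup (map f s)]).
Proof.
apply/permP => a; rewrite count_flatten sumnE !big_map.
have ->: count a s = \sum_(x <- s) \sum_(b <- undup (map f s)) ((f x == b) && a x).
  rewrite -sumn_count sumnE big_map; apply: eq_big_seq => x xs.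
  rewrite (bigD1_seq (f x)) ?undup_uniq ?mem_undup ?map_f //= eqxx /=.
  by rewrite big1 ?addn0 // => b /negbTE; rewrite eq_sym => ->.
rewrite exchange_big; apply: eq_bigr => b _.
by rewrite count_filter -sumn_count sumnE big_map; apply: eq_bigr => x _; rewrite andbC.
Qed.

Lemma acc_of_measure (A : Type) (r : A -> A -> Prop) (P : A -> Prop) (m : A -> nat) :
  (forall x y, P x -> r x y -> P y /\ m y < m x) -> forall x, P x -> Acc (fun y x => r x y) x.
Proof.
move=> dec x Px; have [n lt_xn] : exists n, m x < n by exists (m x).+1.
elim: n x Px lt_xn => [// | n IH] x Px lt_xn; constructor => y rxy.
have [Py lt_yx] := dec x y Px rxy; apply: IH => //.
exact: leq_trans lt_yx _.
Qed.

Lemma perm_foldr_rem (A : eqType) (P S : seq A) :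
  uniq P -> {subset P <= S} -> perm_eq S (P ++ foldr (fun t S => rem t S) S P).
Proof.
elim: P => [|p P IH] /=; first by rewrite perm_refl.
move=> /andP[pP uP] sub; set F := foldr _ _ _.
have peF : perm_eq S (P ++ F) by apply: IH => // x xP; apply: sub; rewrite inE xP orbT.
have pF : p \in F by move: (sub p (mem_head _ _)); rewrite (perm_mem peF) mem_cat (negbTE pP).
apply: (perm_trans peF); rewrite perm_sym -cat1s perm_catCA perm_cat2l perm_sym.
exact: perm_to_rem.
Qed.

Section Multisets.
Variables (Q V : eqType).
Implicit Types (S R X : seq (Q * V)) (t : Q * V) (q : Q) (u v w x : V).

Lemma hv_le_hmax S v : hv S v <= hmax S.
Proof.
case: (posnP (hv S v)) => [-> // | ]; rewrite /hv -has_count => /hasP[t tS /eqP <-].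
exact: (@leq_bigmax_seq _ S xpredT (fun t => hv S t.2) t tS).
Qed.

Lemma hmax_leq S k : (forall v, hv S v <= k) -> hmax S <= k.
Proof. by move=> le_k; apply/bigmax_leqP_seq. Qed.

Lemma exists_pillar S : S != [::] -> exists2 t, t \in S & hv S t.2 = hmax S.
Proof. by move/(bigmax_seq_attained (fun t => hv S t.2)) => [t tS max_t]; exists t. Qed.

Lemma hv_cat X R v : hv (X ++ R) v = hv X v + hv R v.
Proof. exact: count_cat. Qed.

Lemma hv_rem S t v : hv (rem t S) v <= hv S v.
Proof.
case tS: (t \in S); last by rewrite rem_id ?tS.
by rewrite /hv (permP (perm_to_rem tS)) /= leq_addl.
Qed.

Lemma eligible_rem_fat S t : fat 2 S -> t \in S -> eligible 2 (rem t S).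
Proof.
move=> fat_S tS; have size_rem_t : size (rem t S) = (size S).-1 := size_rem tS.
have : hmax (rem t S) <= hmax S.
  by apply: hmax_leq => v; apply: leq_trans (hv_rem _ _ _) (hv_le_hmax _ _).
by move: fat_S; rewrite /fat /eligible size_rem_t; lia.
Qed.

Lemma hvD_leq_size S u v : u != v -> hv S u + hv S v <= size S.
Proof.
move=> neq_uv; rewrite /hv -count_predUI (@eq_count _ (predI _ _) pred0).
  by rewrite count_pred0 addn0 count_size.
by move=> t /=; apply/negP => /andP[/eqP -> /eqP tv]; rewrite tv eqxx in neq_uv.
Qed.

Definition of_class q S : bool := all (fun t => t.1 == q) S.

Lemma hv_of_class q S u : of_class q S -> hv S u = count_mem (q, u) S.
Proof.
move/allP=> Sq; apply: eq_in_count => t /Sq /eqP <-.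
by case: t => a b /=; rewrite xpair_eqE eqxx.
Qed.

Definition majority R w : bool := size R < 2 * hv R w.

Lemma majority_lt R w x : majority R w -> x != w -> hv R x < hv R w.
Proof. by move=> maj /(hvD_leq_size R); move: maj; rewrite /majority; lia. Qed.

Lemma majority_pillar R w x : majority R w -> pillar R x = (x == w).
Proof.
move=> maj; have hmaxE : hmax R = hv R w.
  apply/eqP; rewrite eqn_leq hv_le_hmax andbT; apply: hmax_leq => y.
  by case: (eqVneq y w) => [-> // | /(majority_lt maj)/ltnW].
rewrite /pillar hmaxE; case: (eqVneq x w) => [-> | neq_xw]; first by rewrite eqxx.
by rewrite ltn_eqF // majority_lt.
Qed.

Lemma majority_cat R X w :
  majority R w -> hv X w = 0 -> (forall x, hv X x <= 1) -> size X <= 2 ->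
  size (X ++ R) <= 2 * hv R w + 1 /\ (~~ eligible 2 (X ++ R) -> majority (X ++ R) w).
Proof.
move=> maj Xw X1 X2; have hvw : hv (X ++ R) w = hv R w by rewrite hv_cat Xw.
split; first by move: maj; rewrite /majority size_cat; lia.
have : hmax (X ++ R) <= hv R w.
  apply: hmax_leq => x; case: (eqVneq x w) => [-> | /(majority_lt maj)]; first by rewrite hvw.
  by rewrite hv_cat; have := X1 x; lia.
by rewrite /eligible /majority hvw -ltnNge; lia.
Qed.

Lemma thin_pillar_tuples q S (P := undup [seq t <- S | pillar S t.2]) :
  of_class q S -> thin 2 S ->
  [/\ size P <= 2, forall x, hv P x <= 1 & eligible 2 (foldr (fun t S => rem t S) S P)].
Proof.
move=> Sq thS; set S' := foldr _ _ _; set h := hmax S.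
have uP : uniq P := undup_uniq _.
have memP t : t \in P = (t \in S) && pillar S t.2 by rewrite mem_undup mem_filter andbC.
have subP : {subset P <= S} by move=> t; rewrite memP => /andP[].
have Pq : of_class q P by apply/allP => t /subP; apply: (allP Sq).
have hvS x : hv S x = hv P x + hv S' x.
  by rewrite -hv_cat /hv (permP (perm_foldr_rem uP subP)).
have szS : size S = size P + size S'.
  by rewrite -size_cat (perm_size (perm_foldr_rem uP subP)).
have sizeS : size S = 2 * h by apply/eqP.
have hvP1 x : hv P x <= 1 by rewrite (hv_of_class _ Pq) count_uniq_mem // leq_b1.
have szP : size P <= 2.
  case: (posnP h) => [h0 | h_gt0].
    by apply: leq_trans (uniq_leq_size uP subP) _; rewrite sizeS h0.
  have sumE : \sum_(t <- P) count_mem t S = h * size P.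
    rewrite (eq_big_seq (fun=> h)) ?big_const_seq ?iter_addn_0 ?count_predT //.
    move=> t /[dup] /subP tS; rewrite memP tS /= /pillar -/h => /eqP <-.
    by rewrite (hv_of_class _ Sq); move/allP: Sq => /(_ t tS) /eqP <-; case: t {tS}.
  by rewrite -(leq_pmul2r h_gt0) -sizeS mulnC -sumE sum_count_mem // count_size.
split=> //; rewrite /eligible -/S'; apply: (@leq_trans (2 * (h - 1))); last by lia.
rewrite leq_mul2l /=; apply: hmax_leq => x; have := hv_le_hmax S x; have := hvS x; rewrite -/h.
case: (posnP (hv P x)) => [Px0 | ]; last by lia.
case: (eqVneq (hv S x) h) => [hvSx | ]; last by lia.
case: (posnP h) => [h0 | h_gt0]; first by lia.
suff : 0 < hv P x by lia.
have : 0 < hv S x by rewrite hvSx.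
rewrite /hv -!has_count => /hasP[t tS /eqP tx]; apply/hasP; exists t => /=.
  by rewrite memP tS /pillar -/h tx hvSx eqxx.
by rewrite tx.
Qed.

Lemma count_mem_qclass S t :
  count_mem t S = count_mem t (qclass S t.1).
Proof. by rewrite count_filter; apply: eq_count => x /=; case: eqP => // ->; rewrite eqxx. Qed.

End Multisets.

Section Algorithm.
Variables (Q V : eqType) (T : seq (Q * V)).
Notation mset := (seq (Q * V)).
Notation qs := (qis T).
Implicit Types (S R X : mset) (G : Q -> mset) (t : Q * V) (q : Q) (a : pred (Q * V)).

Lemma count_decomposition R G a :
  perm_eq T (R ++ flatten [seq G q | q <- qs]) ->
  count a T = count a R + \sum_(q <- qs) count a (G q).
Proof. by move/permP=> ->; rewrite count_cat count_flatten sumnE !big_map. Qed.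

Lemma count_decomposition_class R G q a :
  perm_eq T (R ++ flatten [seq G q | q <- qs]) ->
  (forall x, x \in qs -> of_class x (G x)) -> q \in qs -> (forall t, a t -> t.1 == q) ->
  count a T = count a R + count a (G q).
Proof.
move=> pe Gcl qin aq; rewrite (count_decomposition _ pe) (bigD1_seq q) ?undup_uniq //=.
rewrite big1_seq ?addn0 // => x /andP[neq_xq xqs].
rewrite (@eq_in_count _ _ pred0) ?count_pred0 // => t /(allP (Gcl x xqs)) /eqP tx.
by apply/negP => /aq; rewrite tx (negbTE neq_xq).
Qed.

Lemma feasible_count_lb sel R' t : feasible 2 T sel R' ->
  2 * count_mem t T <= count_mem t R' + size (qclass T t.1).
Proof.
case=> pe sel_cl sel_el _; case tT: (t \in T); last by rewrite (count_memPn (negbT tT)).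
have qin : t.1 \in qs by rewrite mem_undup map_f.
have sel_cl' := sel_cl _ qin.
have cnt_t : count_mem t T = count_mem t R' + count_mem t (sel t.1).
  by apply: (count_decomposition_class pe sel_cl qin) => x /eqP ->.
have size_cls : size (qclass T t.1) = size (qclass R' t.1) + size (sel t.1).
  rewrite !size_filter (count_decomposition_class pe sel_cl qin) //.
  by congr addn; apply/eqP; rewrite -all_count.
have le_hmax : count_mem t (sel t.1) <= hmax (sel t.1).
  by case: t {tT qin cnt_t size_cls} sel_cl' => a b /hv_of_class <-; apply: hv_le_hmax.
have := sel_el _ qin; rewrite /eligible => el_sel.
have : count_mem t (qclass R' t.1) <= size (qclass R' t.1) := count_size _ _.
rewrite -count_mem_qclass; lia.
Qed.

Definition decomposes R G : Prop :=
  perm_eq T (R ++ flatten [seq G q | q <- qs]) /\ forall q, of_class q (G q).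

Lemma decomposes_upd R G q X S' :
  decomposes R G -> q \in qs -> perm_eq (G q) (X ++ S') -> decomposes (X ++ R) (upd G q S').
Proof.
case=> pe Gcl qin peG; split; last first.
  move=> x; rewrite /upd; case: eqP => [-> | _] //; apply/allP => t tS'.
  by apply: (allP (Gcl q)); rewrite (perm_mem peG) mem_cat tS' orbT.
apply/permP => a; rewrite (count_decomposition a pe) !count_cat count_flatten sumnE !big_map.
have cntG : count a (G q) = count a X + count a S' by rewrite (permP peG) count_cat.
rewrite !(bigD1_seq q) ?undup_uniq //= /upd eqxx cntG.
rewrite [in RHS](eq_bigr (fun x => count a (G x))) => [|x /negbTE -> //].
(* [count a X] and [count a S'] occur at two convertible element types; [set] unifies them. *)
set cX := count a X; set cS := count a S'; set s := bigop _ _ _; lia.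
Qed.

Definition forced_residue R : Prop :=
  forall t, t \in R -> all (fun t' => t'.2 == t.2) (qclass R t.1) /\
    size (qclass R t.1) + size (qclass T t.1) <= 2 * count_mem t T.

Lemma forced_residue_count_le R sel R' a :
  forced_residue R -> feasible 2 T sel R' -> count a R <= count a R'.
Proof.
move=> forced feas; apply: leq_count_of_count_mem => t.
case tR: (t \in R); last by rewrite (count_memPn (negbT tR)).
have [_ szR] := forced t tR; have := feasible_count_lb t feas.
have : count_mem t (qclass R t.1) <= size (qclass R t.1) := count_size _ _.
rewrite -count_mem_qclass; lia.
Qed.

Lemma forced_residue_room R G q t :
  decomposes R G -> q \in qs -> forced_residue R ->
  ~~ eligible 2 (G q) -> t \in G q -> pillar (G q) t.2 ->
  all (fun t' => t'.2 == t.2) (qclass R q) /\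
  size (qclass R q) + size (qclass T q) < 2 * count_mem t T.
Proof.
move=> [pe Gcl] qin forced not_el tG pil; set S := G q in not_el tG pil.
set D := qclass R q; have Dcl : of_class q D := filter_all _ _.
have tq : t.1 = q by apply/eqP; apply: (allP (Gcl q)).
have tE : t = (q, t.2) by rewrite -tq; case: t {tG pil tq}.
have cntT u : count_mem (q, u) T = hv D u + hv S u.
  rewrite (hv_of_class _ Dcl) (hv_of_class _ (Gcl q)) -(count_mem_qclass R (q, u)).
  by apply: (count_decomposition_class pe) => // x /eqP ->.
have sizeT : size (qclass T q) = size D + size S.
  rewrite !size_filter (count_decomposition_class pe _ qin) //.
  by congr addn; apply/eqP; rewrite -all_count; apply: Gcl.
have maj_t : size S < 2 * hv S t.2.
  by move: not_el pil; rewrite /eligible /pillar -ltnNge => ? /eqP ->.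
case: (altP (D =P [::])) => [D0 | nD].
  by rewrite D0 tE cntT D0 sizeT D0 /=; split=> //; lia.
have [d dD] : exists d, d \in D.
  by move: nD; case: (D) => // d D' _; exists d; rewrite mem_head.
move: (dD); rewrite mem_filter => /andP[/eqP dq dR].
have [all_d size_d] := forced d dR; rewrite dq -/D in all_d size_d.
have dE : d = (q, d.2) by rewrite -dq; case: d {dD dR all_d size_d dq}.
have hvD : hv D d.2 = size D by apply/eqP; rewrite -all_count.
have cnt_d : count_mem d T = size D + hv S d.2 by rewrite {1}dE cntT hvD.
have maj_d : size S <= 2 * hv S d.2 by move: size_d; rewrite cnt_d sizeT; lia.
have td : t.2 = d.2.
  by case: (eqVneq t.2 d.2) => [// | /(hvD_leq_size S) le_size]; exfalso; lia.
have cnt_t : count_mem t T = size D + hv S t.2 by rewrite {1}tE cntT td hvD.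
by rewrite td all_d cnt_t sizeT; split=> //; move: maj_t; lia.
Qed.

Lemma forced_residue_move R G q t :
  decomposes R G -> q \in qs -> forced_residue R ->
  ~~ eligible 2 (G q) -> t \in G q -> pillar (G q) t.2 -> forced_residue (t :: R).
Proof.
move=> dec qin forced not_el tG pil.
have [all_t room] := forced_residue_room dec qin forced not_el tG pil.
have tq : t.1 = q by apply/eqP; apply: (allP (dec.2 q)).
have forced_t : all (fun t' => t'.2 == t.2) (qclass (t :: R) t.1) /\
    size (qclass (t :: R) t.1) + size (qclass T t.1) <= 2 * count_mem t T.
  by rewrite /= tq eqxx /= eqxx all_t addSn.
move=> x; rewrite inE => /predU1P[-> // | xR].
case: (eqVneq x.1 q) => [xq | neq_xq].
  have xD : x \in qclass (t :: R) t.1 by rewrite mem_filter tq xq eqxx inE xR orbT.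
  have /eqP xt2 := allP forced_t.1 x xD.
  by have /eqP -> : x == t by apply/andP; rewrite xq tq xt2.
by rewrite /= tq eq_sym (negbTE neq_xq); apply: forced.
Qed.

Definition groups_eligible G : Prop := forall q, q \in qs -> eligible 2 (G q).

Definition near_optimal R : Prop :=
  forall sel R', feasible 2 T sel R' -> size R <= size R' + 1.

Definition invariant (s : state Q V) : Prop :=
  decomposes (res s) (grp s) /\
  match ph s with
  | PhaseOne l => [/\ {subset l <= qs},
      forall q, q \in qs -> q \notin l -> eligible 2 (grp s q) & forced_residue (res s)]
  | PhaseTwo => groups_eligible (grp s) /\
      exists2 w, majority (res s) w &
        forall sel R', feasible 2 T sel R' -> hv (res s) w <= hv R' w
  | PhaseThree => False
  | Terminated => [/\ groups_eligible (grp s), eligible 2 (res s) & near_optimal (res s)]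
  end.

Lemma invariant_init : invariant (init T).
Proof.
split; last by split=> // q ->.
by split=> [|q]; [rewrite cat0s; apply: perm_flatten_undup_filter | apply: filter_all].
Qed.

Lemma invariant_move q rest G R t :
  invariant (St (PhaseOne (q :: rest)) G R) -> ~~ eligible 2 (G q) -> t \in G q ->
  pillar (G q) t.2 -> invariant (St (PhaseOne (q :: rest)) (upd G q (rem t (G q))) (t :: R)).
Proof.
case=> /= dec [sub_l Gel forced] not_el tG pil; have qin := sub_l q (mem_head _ _).
split; first exact: (decomposes_upd (X := [:: t]) dec qin (perm_to_rem tG)).
split=> //=; last exact: (forced_residue_move dec qin forced not_el tG pil).
move=> x xin; rewrite inE negb_or => /andP[neq_xq xl].
by rewrite /upd (negbTE neq_xq); apply: Gel; rewrite ?inE ?negb_or ?neq_xq.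
Qed.

Lemma invariant_next q rest G R :
  invariant (St (PhaseOne (q :: rest)) G R) -> eligible 2 (G q) ->
  invariant (St (PhaseOne rest) G R).
Proof.
case=> /= dec [sub_l Gel forced] el; split=> //=; split=> // [x xl | x xin xl].
  by apply: sub_l; rewrite inE xl orbT.
by case: (eqVneq x q) => [-> // | neq_xq]; apply: Gel; rewrite ?inE ?negb_or ?neq_xq.
Qed.

Lemma invariant_terminate_phase_one G R :
  invariant (St (PhaseOne [::]) G R) -> eligible 2 R -> invariant (St Terminated G R).
Proof.
case=> /= dec [_ Gel forced] el; split=> //=; split=> // [q qin | sel R' feas].
  exact: Gel.
by have := forced_residue_count_le predT forced feas; rewrite !count_predT; lia.
Qed.

Lemma invariant_enter_phase_two G R :
  invariant (St (PhaseOne [::]) G R) -> ~~ eligible 2 R -> invariant (St PhaseTwo G R).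
Proof.
case=> /= dec [_ Gel forced] not_el; split=> //=; split=> [q qin | ]; first exact: Gel.
have [|t _ max_t] := @exists_pillar _ _ R.
  by apply: contraNneq not_el => ->; rewrite /eligible /hmax big_nil.
exists t.2; first by move: not_el; rewrite /eligible /majority -ltnNge max_t.
by move=> sel R' feas; apply: forced_residue_count_le forced feas.
Qed.

Lemma invariant_phase_two_step G R q X S' :
  invariant (St PhaseTwo G R) -> q \in qs -> perm_eq (G q) (X ++ S') -> eligible 2 S' ->
  (forall w, majority R w -> hv X w = 0) -> (forall x, hv X x <= 1) -> size X <= 2 ->
  invariant (St (if eligible 2 (X ++ R) then Terminated else PhaseTwo) (upd G q S') (X ++ R)).
Proof.
case=> /= dec [Gel [w maj lb]] qin peG el_S' Xw X1 X2.
have [size_XR maj_XR] := majority_cat maj (Xw w maj) X1 X2.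
have Gel' : groups_eligible (upd G q S').
  by move=> x xin; rewrite /upd; case: eqP => // _; apply: Gel.
split; first exact: decomposes_upd.
case: ifP => el /=.
  split=> // sel R' feas; have := lb _ _ feas; have := hv_le_hmax R' w.
  by case: feas => _ _ _; rewrite /eligible; lia.
split=> //; exists w; first exact: maj_XR (negbT el).
by move=> sel R' feas; rewrite hv_cat (Xw w maj) add0n; apply: lb feas.
Qed.

Hypothesis T_eligible : eligible 2 T.

Lemma exists_alive_other R G w :
  decomposes R G -> majority R w -> exists2 u, u != w & alive_val 2 qs G R u.
Proof.
move=> [pe Gcl] maj; apply: NNPP => no_alive.
have bound q : q \in qs -> size (G q) <= 2 * hv (G q) w.
  move=> qin; case: (classic (dead 2 (G q) R)) => [[thin_q [v /andP[pGv pRv]]] | alive_q].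
    rewrite (majority_pillar _ maj) in pRv; rewrite (eqP pRv) in pGv.
    by move: thin_q pGv; rewrite /thin /pillar => /eqP -> /eqP ->.
  suff : all (fun t => t.2 == w) (G q) by rewrite all_count /hv => /eqP ->; lia.
  apply/allP => t tG; apply: contraT => neq_tw; case: no_alive; exists t.2 => //.
  exists q => //; split=> //; rewrite /hv -has_count; apply/hasP; exists t => //=.
have sum_le : \sum_(q <- qs) count predT (G q) <= 2 * \sum_(q <- qs) hv (G q) w.
  by rewrite big_distrr /= !big_seq; apply: leq_sum => q qin; rewrite count_predT bound.
have := count_decomposition predT pe; have := count_decomposition (fun t => t.2 == w) pe.
have := hv_le_hmax T w; move: sum_le T_eligible maj.
by rewrite /eligible /majority /hv !count_predT; lia.
Qed.

Lemma invariant_fat G R v q t :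
  invariant (St PhaseTwo G R) -> (forall w, alive_val 2 qs G R w -> hv R v <= hv R w) ->
  q \in qs -> fat 2 (G q) -> t \in G q -> t.2 = v ->
  invariant (St (if eligible 2 (t :: R) then Terminated else PhaseTwo)
                (upd G q (rem t (G q))) (t :: R)).
Proof.
move=> I v_min qin fat_q tG tv.
apply: (invariant_phase_two_step (X := [:: t])) => //; first exact: perm_to_rem.
- exact: eligible_rem_fat.
- move=> w maj; have [u neq_uw alive_u] := exists_alive_other I.1 maj.
  have := majority_lt maj neq_uw; have := v_min u alive_u.
  by rewrite /hv /= tv; case: eqP => [-> | ]; lia.
- by move=> x; rewrite /hv /=; case: (_ == _).
Qed.

Lemma invariant_thin G R q :
  invariant (St PhaseTwo G R) -> q \in qs -> alive 2 (G q) R -> thin 2 (G q) ->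
  let P := undup [seq t <- G q | pillar (G q) t.2] in
  invariant (St (if eligible 2 (P ++ R) then Terminated else PhaseTwo)
                (upd G q (foldr (fun t S => rem t S) (G q) P)) (P ++ R)).
Proof.
move=> I qin alive_q thin_q P.
have [size_P P1 el_S'] := thin_pillar_tuples (I.1.2 q) thin_q.
apply: invariant_phase_two_step => //.
  by apply: perm_foldr_rem (undup_uniq _) _ => t; rewrite mem_undup mem_filter => /andP[].
move=> w maj; apply/eqP; rewrite -leqn0 leqNgt -has_count; apply/hasP => -[t tP /eqP tw].
apply: alive_q; split=> //; exists w; rewrite (majority_pillar _ maj) eqxx andbT -tw.
by move: tP; rewrite mem_undup mem_filter => /andP[].
Qed.

Definition measure (s : state Q V) : nat :=
  size T - size (res s) + if ph s is PhaseOne l then (size l).+1 else 0.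

Lemma invariant_size_res s : invariant s -> size (res s) <= size T.
Proof. by case=> [[pe _] _]; rewrite (perm_size pe) size_cat leq_addr. Qed.

Lemma invariant_step s s' : invariant s -> step 2 qs s s' -> invariant s'.
Proof.
move=> I st; case: st I.
- by move=> q rest G R t not_el tG pil I; apply: invariant_move.
- by move=> q rest G R el I; apply: invariant_next I el.
- by move=> G R el I; apply: invariant_terminate_phase_one.
- by move=> G R not_el I; apply: invariant_enter_phase_two.
- move=> G R no_alive [/= dec [_ [w maj _]]].
  by have [u _ /no_alive] := exists_alive_other dec maj.
- move=> G R v q t _ v_min qin _ _ fat_q tG tv I.
  exact: invariant_fat I v_min qin fat_q tG tv.
- by move=> G R v q _ _ qin alive_q _ thin_q P I; apply: invariant_thin.
Qed.

Lemma measure_step s s' : invariant s' -> step 2 qs s s' -> measure s' < measure s.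
Proof.
move=> I' st; have := invariant_size_res I'; rewrite /measure.
case: st I' => /=; try by move=> *; lia.
- by move=> G R _ [_ []].
- by move=> *; case: ifP => _ /=; lia.
move=> G R v q _ _ _ _ hv_pos _ _; set P := undup _.
have : 0 < size P.
  have [|t tG max_t] := @exists_pillar _ _ (G q); first by apply: contraTneq hv_pos => ->.
  have : t \in P by rewrite mem_undup mem_filter tG /pillar max_t eqxx.
  by case: (P).
by case: ifP => _ /=; rewrite size_cat; lia.
Qed.

Lemma step_exists s : invariant s -> ph s = Terminated \/ exists s', step 2 qs s s'.
Proof.
case: s => [[[|q rest] | | |] G R] /= [dec inv_ph]; [right | right | right | by [] | by left].
- case: (boolP (eligible 2 R)) => el.
    by exists (St Terminated G R); apply: s1_term.
  by exists (St PhaseTwo G R); apply: s1_to2.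
- case: (boolP (eligible 2 (G q))) => el.
    by exists (St (PhaseOne rest) G R); apply: s1_next.
  have [|t tG max_t] := @exists_pillar _ _ (G q).
    by apply: contraNneq el => ->; rewrite /eligible /hmax big_nil.
  by eexists; apply: (s1_move _ _ _ el tG); rewrite /pillar max_t.
have [Gel [w maj _]] := inv_ph; have [u _ alive_u] := exists_alive_other dec maj.
have [v alive_v v_min] := ex_minimizer (hv R) (ex_intro _ u alive_u).
have [q qin [alive_q hv_pos]] := alive_v.
case: (eqVneq (size (G q)) (2 * hmax (G q))) => [thin_q | not_thin].
  by eexists; apply: (s2_thin alive_v v_min qin alive_q hv_pos); apply/eqP.
have fat_q : fat 2 (G q) by rewrite /fat addn1 ltn_neqAle eq_sym not_thin; apply: Gel.
move: (hv_pos); rewrite /hv -has_count => /hasP[t tG /eqP tv].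
by eexists; apply: (s2_fat alive_v v_min qin alive_q hv_pos fat_q tG tv).
Qed.

Lemma reachable_invariant s : reach 2 qs (init T) s -> invariant s.
Proof.
elim=> [|s1 s2 _ I1 st]; first exact: invariant_init.
exact: invariant_step I1 st.
Qed.

End Algorithm.

Theorem theorem2 (Q V : eqType) (T : seq (Q * V)) :
  eligible 2 T ->
  (* every run is finite *)
  Acc (fun s' s => step 2 (qis T) s s') (init T) /\
  (* every run stops only by terminating (in Phase One or Phase Two) *)
  (forall s, reach 2 (qis T) (init T) s ->
     (forall s', ~ step 2 (qis T) s s') -> ph s = Terminated) /\
  (* the output is feasible and |R..| <= OPT + 1 *)
  (forall s, reach 2 (qis T) (init T) s -> ph s = Terminated ->
     feasible 2 T (grp s) (res s) /\
     (forall sel R', feasible 2 T sel R' -> size (res s) <= size R' + 1)).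
Proof.
move=> T_el; split; last split.
- apply: (acc_of_measure (m := measure T)) (invariant_init T) => s s' I st.
  have I' := invariant_step T_el I st; split=> //; exact: measure_step I' st.
- move=> s /(reachable_invariant T_el) I stuck.
  by case: (step_exists T_el I) => // -[s' /stuck].
move=> s /(reachable_invariant T_el) [[pe Gcl] inv_ph] term.
by move: inv_ph; rewrite term => -[Gel el opt]; split=> //; split=> // q _; apply: Gcl.
Qed.
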